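(* Let $H \subset L$ be light-cone regular and assume that the equation $f_h = \Phi(f_{h+v_1},\ldots,f_{h+v_N})$ has the Laurent property, the irreducibility and the coprimeness on $H$. Then it also has these three properties when considered over the coefficient field $K$: for every $h \in H \setminus H_0$, $f_h$ is an irreducible element of $K_{H_0}$, and for every pair $h_1, h_2 \in H$ with $h_1 \neq h_2$, $f_{h_1}$ and $f_{h_2}$ are coprime in $K_{H_0}$.
   Context: Let $R$ be a unique factorization domain with field of fractions $K$. Let $L$ be a finitely generated $\mathbb{Z}$-module (possibly with torsion). Fix distinct $v_1,\dots,v_N\in L$ which generate $L$ and are linearly independent over $\mathbb{Z}_{\ge 0}$ (i.e. $\sum_i a_i v_i=0$ with all $a_i\in\mathbb{Z}_{\ge0}$ forces all $a_i=0$), and an irreducible Laurent polynomial $\Phi\in R[Y_1^{\pm1},\dots,Y_N^{\pm1}]$ which is not a Laurent monomial and depends on every variable. Consider the equation $f_h=\Phi(f_{h+v_1},\dots,f_{h+v_N})$ ($h\in L$). Let $S=\{\sum_i a_iv_i : a_i\in\mathbb{Z}_{\ge0}\}$ and $h_1\le h_2$ iff $h_1-h_2\in S$. Assume $v_N$ is the minimum of $\{0,v_1,\dots,v_N\}$ for $\le$ and the equation can be solved as $f_{h+v_N}=\Psi(f_{h+v_1},\dots,f_{h+v_{N-1}},f_h)$ with $\Psi$ an irreducible Laurent polynomial over $R$. A nonempty $H\subset L$ is light-cone regular if for every $h\in H$ the set $\{h'\in H: h'\le h\}$ is finite and $\{h'\in L: h'\ge h\}\subset H$; its initial boundary is $H_0=\{h\in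 H:\ h+v_i\notin H\text{ for some }i\}$. The $f_{h}$ ($h\in H_0$) are algebraically independent indeterminates over $K$, and for $h\in H\setminus H_0$, $f_h$ is defined recursively by the equation in $K(f_{h_0}: h_0\in H_0)$. For $T\subset L$, $R_T=R[f_h^{\pm1}: h\in T]$, $K_T=K[f_h^{\pm1}: h\in T]$. Laurent property on $H$: $f_h\in R_{H_0}$ for all $h\in H$; irreducibility: every $f_h$ ($h\in H$) is irreducible in $R_{H_0}$ (units count as irreducible); coprimeness: $f_{h_1},f_{h_2}$ coprime in $R_{H_0}$ for all $h_1\neq h_2$ in $H$. *)

From HB Require Import structures.
From mathcomp Require Import all_boot all_order all_algebra.
From mathcomp Require Import fraction.
From mathcomp Require Import mpoly.

Set Implicit Arguments.
Unset Strict Implicit.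
Unset Printing Implicit Defensive.

Import Order.TTheory GRing.Theory Num.Theory.
Local Open Scope ring_scope.

Definition ufd_irreducible (R : idomainType) (a : R) : Prop :=
  [/\ a != 0, a \isn't a GRing.unit &
      forall b c : R, a = b * c -> b \is a GRing.unit \/ c \is a GRing.unit].

Definition associated (R : idomainType) (a b : R) : Prop :=
  exists2 u : R, u \is a GRing.unit & a = u * b.

Definition is_UFD (R : idomainType) : Prop :=
  (forall a : R, a != 0 -> a \isn't a GRing.unit ->
     exists2 s : seq R, (forall x, x \in s -> ufd_irreducible x)
                        & a = \prod_(x <- s) x)
  /\
  (forall s t : seq R,
     (forall x, x \in s -> ufd_irreducible x) ->
     (forall x, x \in t -> ufd_irreducible x) ->
     \prod_(x <- s) x = \prod_(x <- t) x ->
     exists2 t' : seq R, perm_eq t t' &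
       size s = size t' /\
       forall i, (i < size s)%N -> associated (nth 0 s i) (nth 0 t' i)).

(* Subrings A[x_i^{+-1} : i in T] of a field F, generated by the image   *)
(* of a coefficient ring A (via c) and the elements x_i, x_i^{-1}, i\in T. *)

Inductive laurent_ring (A : nzRingType) (F : fieldType) (I : Type)
    (c : A -> F) (x : I -> F) (T : I -> Prop) : F -> Prop :=
| lr_const a : laurent_ring c x T (c a)
| lr_var i : T i -> laurent_ring c x T (x i)
| lr_inv i : T i -> laurent_ring c x T ((x i)^-1)
| lr_add a b : laurent_ring c x T a -> laurent_ring c x T b ->
               laurent_ring c x T (a + b)
| lr_opp a : laurent_ring c x T a -> laurent_ring c x T (- a)
| lr_mul a b : laurent_ring c x T a -> laurent_ring c x T b ->
               laurent_ring c x T (a * b).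

Section SubringNotions.
Variable (F : fieldType) (S : F -> Prop).

Definition sunit (a : F) : Prop := S a /\ exists2 b, S b & a * b = 1.

Definition sdvd (a b : F) : Prop := exists2 c, S c & b = a * c.

(* irreducible element of S; units count as irreducible *)
Definition sirreducible (a : F) : Prop :=
  [/\ S a, a != 0 &
      forall b c, S b -> S c -> a = b * c -> sunit b \/ sunit c].

Definition scoprime (a b : F) : Prop :=
  forall d, S d -> sdvd d a -> sdvd d b -> sunit d.
End SubringNotions.

Definition alg_indep (K F : fieldType) (kappa : {rmorphism K -> F})
    (I : eqType) (x : I -> F) (T : I -> Prop) : Prop :=
  forall (n : nat) (idx : 'I_n -> I), injective idx -> (forall j, T (idx j)) ->
  forall p : {mpoly K[n]}, p != 0 -> mmap kappa (fun j => x (idx j)) p != 0.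

(* Laurent polynomials over R in N variables, represented as pairs      *)
(* (P, d) standing for P(Y) * Y^(-d).                                    *)

Definition lpoly (R : idomainType) (N : nat) := ({mpoly R[N]} * 'X_{1..N})%type.

Definition leval (R : idomainType) (S : fieldType) (N : nat)
    (c : R -> S) (y : 'I_N -> S) (P : lpoly R N) : S :=
  mmap c y P.1 / mmap1 y P.2.

Definition ratfun (R : idomainType) (N : nat) := {fraction {mpoly R[N]}}.

Definition rcst (R : idomainType) (N : nat) (r : R) : ratfun R N :=
  FracField.tofrac (r%:MP_[N]).

Definition rvar (R : idomainType) (N : nat) (i : 'I_N) : ratfun R N :=
  FracField.tofrac ('X_i : {mpoly R[N]}).

Definition LaurentR (R : idomainType) (N : nat) (T : 'I_N -> Prop) :
  ratfun R N -> Prop := laurent_ring (@rcst R N) (@rvar R N) T.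

Definition lelem (R : idomainType) (N : nat) (P : lpoly R N) : ratfun R N :=
  leval (@rcst R N) (@rvar R N) P.

Definition is_laurent_monomial (R : idomainType) (N : nat) (P : lpoly R N) :=
  exists (a : R) (m : 'I_N -> int),
    lelem P = @rcst R N a * \prod_(i < N) @rvar R N i ^ m i.

Definition depends_on_all (R : idomainType) (N : nat) (P : lpoly R N) :=
  forall i : 'I_N, ~ LaurentR (fun j => j != i) (lelem P).

Section Lattice.
Variables (L : zmodType) (N : nat) (v : 'I_N -> L).

Definition generates : Prop :=
  forall x : L, exists c : 'I_N -> int, x = \sum_(i < N) v i *~ c i.

Definition nonneg_indep : Prop :=
  forall a : 'I_N -> nat, \sum_(i < N) v i *+ a i = 0 -> forall i, a i = 0%N.

Definition inS (x : L) : Prop := exists a : 'I_N -> nat, x = \sum_(i < N) v i *+ a i.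

Definition lle (h1 h2 : L) : Prop := inS (h1 - h2).

Definition light_cone_regular (H : L -> Prop) : Prop :=
  [/\ exists h, H h,
      forall h, H h -> exists s : seq L, forall h', H h' -> lle h' h -> h' \in s
    & forall h, H h -> forall h', lle h h' -> H h'].

Definition init_boundary (H : L -> Prop) (h : L) : Prop :=
  H h /\ exists i : 'I_N, ~ H (h + v i).
End Lattice.

(* Given kappa : K = Frac(R) -> F and values f : L -> F, the rings       *)
(* R_T = R[f_h^{+-1} : h in T] and K_T = K[f_h^{+-1} : h in T] inside F. *)
Definition ringR (R : idomainType) (F : fieldType)
    (kappa : {rmorphism {fraction R} -> F}) (L : Type) (f : L -> F)
    (T : L -> Prop) : F -> Prop :=
  laurent_ring (fun r : R => kappa (FracField.tofrac r)) f T.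

Definition ringK (R : idomainType) (F : fieldType)
    (kappa : {rmorphism {fraction R} -> F}) (L : Type) (f : L -> F)
    (T : L -> Prop) : F -> Prop :=
  laurent_ring kappa f T.

(* Since the f_h, h in H_0, are algebraically independent over K, R_{H_0} is a
   Laurent polynomial ring over the UFD R and K_{H_0} is its localisation at
   R \ {0}.  By Gauss's lemma an irreducible p of R stays prime in R_{H_0}.
   Clearing denominators turns a factorisation f = b c in K_{H_0} into
   m f = b' c' in R_{H_0} with 0 <> m in R; dividing the prime factors of m out
   of b' and c' one at a time leaves a factorisation of f in R_{H_0} whose
   factors are constant multiples of b and c.  So irreducibility and
   coprimeness descend from R_{H_0} to K_{H_0}, and the Laurent property is
   the inclusion R_{H_0} <= K_{H_0}. *)

From Pilot Require Import Defs.
From HB Require Import structures.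
From mathcomp Require Import all_boot all_order all_algebra.
From mathcomp Require Import fraction.
From mathcomp Require Import mpoly.
From mathcomp Require Import ring.
From Stdlib Require Import Classical.

Set Implicit Arguments.
Unset Strict Implicit.
Unset Printing Implicit Defensive.

Import Order.TTheory GRing.Theory Num.Theory.
Local Open Scope ring_scope.

Definition divides (S : nzRingType) (d a : S) : Prop := exists c, a = d * c.

Lemma dividesD (S : nzRingType) (d a b : S) :
  divides d a -> divides d b -> divides d (a + b).
Proof. by move=> [a' ->] [b' ->]; exists (a' + b'); rewrite mulrDr. Qed.

Lemma dividesB (S : nzRingType) (d a b : S) :
  divides d a -> divides d b -> divides d (a - b).
Proof. by move=> [a' ->] [b' ->]; exists (a' - b'); rewrite mulrBr. Qed.

Lemma dividesMr (S : nzRingType) (d a b : S) : divides d a -> divides d (a * b).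
Proof. by move=> [a' ->]; exists (a' * b); rewrite mulrA. Qed.

Lemma mmap1D (S : comNzRingType) n (h : 'I_n -> S) m1 m2 :
  mmap1 h (m1 + m2) = mmap1 h m1 * mmap1 h m2.
Proof. by rewrite commr_mmap1_M // => i y; apply: mulrC. Qed.

Section UniqueFactorization.
Variables (R : idomainType) (hR : is_UFD R).

Lemma ufd_factorization (a : R) : a != 0 ->
  exists u s, [/\ u \is a GRing.unit, {in s, forall q, ufd_irreducible q}
                & a = u * \prod_(q <- s) q].
Proof.
move=> a0; have [a_unit | a_nunit] := boolP (a \is a GRing.unit).
  by exists a, [::]; rewrite big_nil mulr1.
have [s s_irr ->] := hR.1 a a0 a_nunit.
by exists 1, s; rewrite unitr1 mul1r.
Qed.

Lemma ufd_irreducibleMr_unit (q u : R) :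
  ufd_irreducible q -> u \is a GRing.unit -> ufd_irreducible (q * u).
Proof.
move=> [q0 q_nunit q_irr] u_unit; split.
- by rewrite mulf_neq0 //; apply: contraTneq u_unit => ->; rewrite unitr0.
- by rewrite unitrMl.
move=> b c /(congr1 ( *%R^~ u^-1)); rewrite mulrK // -mulrA => /q_irr.
by case=> [|]; [left | rewrite unitrMl ?unitrV //; right].
Qed.

Lemma divides_mem_prod (d q u : R) (s : seq R) :
  q \in s -> divides d q -> divides d (u * \prod_(x <- s) x).
Proof.
move=> qs [c qc]; exists (u * c * \prod_(x <- rem q s) x).
by rewrite (big_rem _ qs) qc /=; ring.
Qed.

Lemma ufd_irreducible_prime (p : R) : ufd_irreducible p ->
  forall a b, divides p (a * b) -> divides p a \/ divides p b.
Proof.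
move=> p_irr a b [c eab].
have [->|a0] := eqVneq a 0; first by left; exists 0; rewrite mulr0.
have [->|b0] := eqVneq b 0; first by right; exists 0; rewrite mulr0.
have c0 : c != 0 by apply: contraNneq (mulf_neq0 a0 b0) => c0; rewrite eab c0 mulr0.
have [ua [sa [ua_unit sa_irr ea]]] := ufd_factorization a0.
have [ub [sb [ub_unit sb_irr eb]]] := ufd_factorization b0.
have [uc [sc [uc_unit sc_irr ec]]] := ufd_factorization c0.
have uab_unit : ua * ub \is a GRing.unit by rewrite unitrM ua_unit.
pose q := p * (uc / (ua * ub)).
have q_irr : ufd_irreducible q.
  by apply: ufd_irreducibleMr_unit; rewrite // unitrM unitrV uab_unit uc_unit.
have qsc_irr : {in q :: sc, forall x, ufd_irreducible x}.
  by move=> x; rewrite inE => /predU1P [->|/sc_irr].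
have sab_irr : {in sa ++ sb, forall x, ufd_irreducible x}.
  by move=> x; rewrite mem_cat => /orP [/sa_irr|/sb_irr].
have e : \prod_(x <- q :: sc) x = \prod_(x <- sa ++ sb) x.
  apply: (mulIr uab_unit); rewrite big_cons big_cat /=.
  rewrite [LHS](_ : _ = p * (uc * \prod_(x <- sc) x) * ((ua * ub)^-1 * (ua * ub))).
    by rewrite mulVr // mulr1 -ec -eab ea eb; ring.
  by rewrite /q; ring.
have [t' perm_t' [size_t' assoc_t']] := hR.2 _ _ qsc_irr sab_irr e.
have [w w_unit /= qw] := assoc_t' 0%N isT.
have x_in : nth 0 t' 0 \in sa ++ sb by rewrite (perm_mem perm_t') mem_nth // -size_t'.
have px : divides p (nth 0 t' 0).
  by exists (w^-1 * (uc / (ua * ub))); rewrite mulrCA -/q qw mulKr.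
rewrite mem_cat in x_in; case/orP: x_in => x_in.
  by left; rewrite ea; apply: divides_mem_prod px.
by right; rewrite eb; apply: divides_mem_prod px.
Qed.

End UniqueFactorization.

Section PrimeConstant.
Variables (R : idomainType) (n : nat) (p : R).
Hypothesis p_prime : forall a b : R, divides p (a * b) -> divides p a \/ divides p b.

Local Notation P := (p%:MP : {mpoly R[n]}).

Lemma dividesC_mcoeff (Q : {mpoly R[n]}) m : divides P Q -> divides p Q@_m.
Proof. by move=> [Q' ->]; exists Q'@_m; rewrite mcoeffCM. Qed.

Lemma dividesC_term (Q : {mpoly R[n]}) m : divides p Q@_m -> divides P (Q@_m *: 'X_[m]).
Proof. by move=> [c ->]; exists (c *: 'X_[m]); rewrite mul_mpolyC scalerA. Qed.

Lemma size_msupp_drop_term (Q : {mpoly R[n]}) m : Q@_m != 0 ->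
  (size (msupp (Q - Q@_m *: 'X_[m])) < size (msupp Q))%N.
Proof.
rewrite -mcoeff_msupp => mQ; rewrite (perm_size (msupp_rem Q m)) size_rem //.
by case: (msupp Q) mQ.
Qed.

(* Nonzero coefficients divisible by p are dropped one at a time; once none is
   left, the coefficient of X * Y at mlead X + mlead Y is a product of two
   coefficients prime to p. *)
Lemma dividesC_mul (X Y : {mpoly R[n]}) :
  divides P (X * Y) -> divides P X \/ divides P Y.
Proof.
have [k] := ubnP (size (msupp X) + size (msupp Y)).
elim: k X Y => // k IH X Y /ltnSE hk pXY.
have drop X1 Y1 m : (size (msupp X1) + size (msupp Y1) <= k)%N ->
    X1@_m != 0 -> divides p X1@_m -> divides P (X1 * Y1) ->
    divides P X1 \/ divides P Y1.
  move=> hk1 X1m0 /dividesC_term pX1m pX1Y1.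
  pose X1' := X1 - X1@_m *: 'X_[m].
  have lt_k : (size (msupp X1') + size (msupp Y1) < k)%N.
    by apply: (leq_trans _ hk1); rewrite ltn_add2r size_msupp_drop_term.
  have pX1'Y1 : divides P (X1' * Y1).
    by rewrite mulrBl; apply: dividesB => //; apply: dividesMr.
  have [pX1'|] := IH X1' Y1 lt_k pX1'Y1; last by right.
  by left; rewrite -(subrK (X1@_m *: 'X_[m]) X1); apply: dividesD.
have [[m [Xm0 pXm]] | nX] := classic (exists m, X@_m != 0 /\ divides p X@_m).
  exact: drop Xm0 pXm pXY.
have [[m [Ym0 pYm]] | nY] := classic (exists m, Y@_m != 0 /\ divides p Y@_m).
  by apply/or_comm/(drop Y X m) => //; [rewrite addnC | rewrite mulrC].
have [->|X0] := eqVneq X 0; first by left; exists 0; rewrite mulr0.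
have [->|Y0] := eqVneq Y 0; first by right; exists 0; rewrite mulr0.
have := dividesC_mcoeff (mlead X + mlead Y) pXY; rewrite mleadcM.
case/p_prime => [pX | pY]; [case: nX; exists (mlead X) | case: nY; exists (mlead Y)];
  by rewrite mleadc_eq0.
Qed.

Lemma dividesC_mulX (Q : {mpoly R[n]}) m : p \isn't a GRing.unit ->
  divides P (Q * 'X_[m]) -> divides P Q.
Proof.
move=> p_nunit /dividesC_mul [//|/(dividesC_mcoeff m) [c]].
by rewrite mcoeffX eqxx => /esym pc1; case/negP: p_nunit; apply/unitrPr; exists c.
Qed.

End PrimeConstant.

Section LaurentRingSupport.
Variables (S : nzRingType) (F : fieldType) (I : eqType) (c : S -> F) (x : I -> F).

Lemma laurent_ring_mono (T T' : I -> Prop) a :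
  (forall i, T i -> T' i) -> laurent_ring c x T a -> laurent_ring c x T' a.
Proof.
move=> sTT'; elim=> *; by [apply: lr_const | apply: lr_var; auto |
  apply: lr_inv; auto | apply: lr_add | apply: lr_opp | apply: lr_mul].
Qed.

Lemma laurent_ring_finite_support (T : I -> Prop) a : laurent_ring c x T a ->
  exists2 s : seq I, {in s, forall i, T i} & laurent_ring c x (fun i => i \in s) a.
Proof.
have merge a1 a2 s1 s2 : {in s1, forall i, T i} -> {in s2, forall i, T i} ->
    laurent_ring c x (fun i => i \in s1) a1 -> laurent_ring c x (fun i => i \in s2) a2 ->
    [/\ {in s1 ++ s2, forall i, T i}, laurent_ring c x (fun i => i \in s1 ++ s2) a1
      & laurent_ring c x (fun i => i \in s1 ++ s2) a2].
  move=> T1 T2 l1 l2; split; first by move=> i; rewrite mem_cat => /orP [/T1|/T2].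
    by apply: laurent_ring_mono l1 => i i1; rewrite mem_cat i1.
  by apply: laurent_ring_mono l2 => i i2; rewrite mem_cat i2 orbT.
elim=> {a} [r | i Ti | i Ti | a1 a2 _ [s1 T1 l1] _ [s2 T2 l2] | a _ [s Ts l]
           | a1 a2 _ [s1 T1 l1] _ [s2 T2 l2]].
- by exists [::]; [|apply: lr_const].
- by exists [:: i]; [move=> j /[1!inE] /eqP -> | apply: lr_var; rewrite inE].
- by exists [:: i]; [move=> j /[1!inE] /eqP -> | apply: lr_inv; rewrite inE].
- by have [T12 l1' l2'] := merge _ _ _ _ T1 T2 l1 l2; exists (s1 ++ s2); last apply: lr_add.
- by exists s; last apply: lr_opp.
- by have [T12 l1' l2'] := merge _ _ _ _ T1 T2 l1 l2; exists (s1 ++ s2); last apply: lr_mul.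
Qed.

Lemma laurent_ring_common_support (T : I -> Prop) (l : seq F) :
  {in l, forall a, laurent_ring c x T a} ->
  exists s : seq I, [/\ uniq s, {in s, forall i, T i}
                      & {in l, forall a, laurent_ring c x (fun i => i \in s) a}].
Proof.
elim: l => [|a l IH] hl; first by exists [::].
have [sa Ta la] := laurent_ring_finite_support (hl a (mem_head a l)).
have /IH [s [_ Ts ls]] : {in l, forall b, laurent_ring c x T b}.
  by move=> b bl; apply: hl; rewrite inE bl orbT.
exists (undup (sa ++ s)); split; first exact: undup_uniq.
  by move=> i; rewrite mem_undup mem_cat => /orP [/Ta|/Ts].
move=> b /[1!inE] /predU1P [-> | bl]; [move: la | move: (ls b bl)];
  by apply: laurent_ring_mono => i; rewrite mem_undup mem_cat => ->; rewrite ?orbT.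
Qed.

End LaurentRingSupport.

Lemma tofrac_clear_denom (R : idomainType) (k : {fraction R}) :
  exists a b : R, b != 0 /\ k * FracField.tofrac b = FracField.tofrac a.
Proof.
elim/quotW: k => ab; exists ab.1, ab.2; split; first exact: denom_ratioP.
rewrite -[_ * _]/(FracField.mul _ _); unlock FracField.tofrac.
rewrite !piE /FracField.mulf /=; apply/eqmodP.
rewrite /= FracField.equivfE !numden_Ratio ?mulf_neq0 ?oner_eq0 ?denom_ratioP //.
by rewrite !mulr1 mulrC.
Qed.

Section LaurentRings.
Variables (R : idomainType) (F : fieldType) (kappa : {rmorphism {fraction R} -> F}).
Variables (I : eqType) (x : I -> F) (T : I -> Prop).

Local Notation "r %:F" := (kappa (FracField.tofrac r)).
Local Notation A := (ringR kappa x T).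
Local Notation B := (ringK kappa x T).

Lemma ringR_cst r : A r%:F. Proof. exact: lr_const. Qed.

Lemma ringR0 : A 0. Proof. by rewrite -(rmorph0 kappa) -tofrac0; apply: ringR_cst. Qed.

Lemma ringR1 : A 1. Proof. by rewrite -(rmorph1 kappa) -tofrac1; apply: ringR_cst. Qed.

Lemma ringR_exp a k : A a -> A (a ^+ k).
Proof.
move=> Aa; elim: k => [|k IH]; first by rewrite expr0; apply: ringR1.
by rewrite exprS; apply: lr_mul.
Qed.

Lemma ringR_sum (J : Type) (l : seq J) (P : pred J) (g : J -> F) :
  (forall j, P j -> A (g j)) -> A (\sum_(j <- l | P j) g j).
Proof. by move=> Ag; apply: big_ind => //; [apply: ringR0 | apply: lr_add]. Qed.

Lemma ringR_prod (J : Type) (l : seq J) (P : pred J) (g : J -> F) :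
  (forall j, P j -> A (g j)) -> A (\prod_(j <- l | P j) g j).
Proof. by move=> Ag; apply: big_ind => //; [apply: ringR1 | apply: lr_mul]. Qed.

Lemma ringR_ringK a : A a -> B a.
Proof.
elim=> *; by [apply: (lr_const _ _ _ (FracField.tofrac _)) | apply: lr_var |
  apply: lr_inv | apply: lr_add | apply: lr_opp | apply: lr_mul].
Qed.

Lemma ringK_clear_denom b : B b -> exists2 r : R, r != 0 & A (r%:F * b).
Proof.
elim=> {b} [k | i Ti | i Ti | a b _ [ra ra0 Aa] _ [rb rb0 Ab] | a _ [r r0 Aa]
           | a b _ [ra ra0 Aa] _ [rb rb0 Ab]].
- have [a [r [r0 kr]]] := tofrac_clear_denom k.
  by exists r; rewrite // mulrC -rmorphM kr; apply: ringR_cst.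
- by exists 1; rewrite ?oner_eq0 // tofrac1 rmorph1 mul1r; apply: lr_var.
- by exists 1; rewrite ?oner_eq0 // tofrac1 rmorph1 mul1r; apply: lr_inv.
- exists (ra * rb); first by rewrite mulf_neq0.
  rewrite [_ * _](_ : _ = rb%:F * (ra%:F * a) + ra%:F * (rb%:F * b)).
    by apply: lr_add; apply: lr_mul => //; apply: ringR_cst.
  by rewrite tofracM rmorphM; ring.
- by exists r; rewrite // mulrN; apply: lr_opp.
- exists (ra * rb); first by rewrite mulf_neq0.
  by rewrite tofracM rmorphM mulrACA; apply: lr_mul.
Qed.

Lemma kappa_tofrac_eq0 r : (r%:F == 0) = (r == 0).
Proof. by rewrite fmorph_eq0 tofrac_eq0. Qed.

Lemma sunit_ringK_scale r m b g : r != 0 -> b != 0 ->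
  r%:F * b = m%:F * g -> sunit A g -> sunit B b.
Proof.
move=> r0 b0 e [Ag [g' Ag' gg']].
have m0 : m != 0.
  apply: contraNneq b0 => m0; move/eqP: e.
  by rewrite m0 tofrac0 rmorph0 mul0r mulf_eq0 kappa_tofrac_eq0 (negbTE r0).
have eb : b = kappa (FracField.tofrac m / FracField.tofrac r) * g.
  by rewrite fmorph_div /= mulrAC -e mulrAC mulfV ?mul1r ?kappa_tofrac_eq0.
split; first by rewrite eb; apply: lr_mul; [apply: lr_const | apply: ringR_ringK].
exists (kappa (FracField.tofrac r / FracField.tofrac m) * g').
  by apply: lr_mul; [apply: lr_const | apply: ringR_ringK].
by rewrite eb mulrACA gg' mulr1 -rmorphM mulrA divfK ?mulfV ?tofrac_eq0 ?rmorph1.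
Qed.

Definition subfamily (s : seq I) : 'I_(size s) -> F :=
  fun j => x (tnth (in_tuple s) j).
Arguments subfamily : clear implicits.

Local Notation ev s P := (mmap (kappa \o @FracField.tofrac R)%FUN (subfamily s) P).

Section Representation.
Variable s : seq I.
Hypotheses (s_uniq : uniq s) (sT : {in s, forall i, T i}).
Hypothesis x_indep : alg_indep kappa x T.

Local Notation y := (subfamily s).

Lemma ev_subfamily_inj : injective (fun P : {mpoly R[size s]} => ev s P).
Proof.
suff ev_eq0 P : ev s P = 0 -> P = 0.
  move=> P Q ePQ; apply/eqP; rewrite -subr_eq0; apply/eqP/ev_eq0.
  by rewrite rmorphB /= ePQ subrr.
move=> eP0; apply/eqP; apply: contraT => P0.
have tofrac_inj : injective (@FracField.tofrac R).
  by move=> a b /eqP; rewrite tofrac_eq => /eqP.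
have PK0 : map_mpoly (@FracField.tofrac R) P != 0.
  apply: contra P0 => /eqP PK0; apply/eqP/mpolyP => m.
  have := congr1 (mcoeff m) PK0; rewrite mcoeff_map_mpoly !mcoeff0.
  by rewrite -tofrac0 => /tofrac_inj.
have idx_inj : injective (tnth (in_tuple s)) by apply/tuple_uniqP.
have := x_indep idx_inj (fun j => sT (mem_tnth j (in_tuple s))) PK0.
suff -> : mmap kappa (fun j => x (tnth (in_tuple s) j)) (map_mpoly (@FracField.tofrac R) P)
          = ev s P by rewrite eP0 eqxx.
rewrite /mmap (perm_big _ (msupp_map_mpoly _ tofrac_inj)); apply: eq_bigr => m _.
by rewrite mcoeff_map_mpoly.
Qed.

Lemma mmap1_subfamily_neq0 m : mmap1 y m != 0.
Proof.
apply/eqP => m0; have : ev s 'X_[m] = ev s 0 by rewrite mmapX rmorph0.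
move/ev_subfamily_inj/(congr1 (mcoeff m)).
by rewrite mcoeffX eqxx mcoeff0 => /eqP; rewrite oner_eq0.
Qed.

Lemma ringR_ev P : A (ev s P).
Proof.
apply: ringR_sum => m _; apply: lr_mul; first exact: ringR_cst.
by apply: ringR_prod => j _; apply/ringR_exp/lr_var/sT/mem_tnth.
Qed.

Lemma ringR_mmap1V m : A (mmap1 y m)^-1.
Proof.
rewrite /mmap1 -prodfV; apply: ringR_prod => j _; rewrite -exprVn.
by apply/ringR_exp/lr_inv/sT/mem_tnth.
Qed.

Lemma ringR_subfamily_rep a : ringR kappa x (fun i => i \in s) a ->
  exists P m, a = ev s P / mmap1 y m.
Proof.
have nz := mmap1_subfamily_neq0.
elim=> {a} [r | i si | i si | a b _ [Pa [ma ->]] _ [Pb [mb ->]] | a _ [P [m ->]]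
           | a b _ [Pa [ma ->]] _ [Pb [mb ->]]].
- by exists r%:MP, 0%MM; rewrite mmapC mmap11 divr1.
- have i_idx : (index i s < size s)%N by rewrite index_mem.
  exists 'X_[mnm1 (Ordinal i_idx)], 0%MM.
  by rewrite mmapX mmap1U mmap11 divr1 /subfamily (tnth_nth i) nth_index.
- have i_idx : (index i s < size s)%N by rewrite index_mem.
  exists 1%R, (mnm1 (Ordinal i_idx)).
  by rewrite rmorph1 mmap1U /subfamily (tnth_nth i) nth_index ?div1r.
- exists (Pa * 'X_[mb] + Pb * 'X_[ma]), (ma + mb)%MM.
  rewrite rmorphD !rmorphM /= !mmapX mmap1D.
  by field; rewrite !nz.
- by exists (- P), m; rewrite rmorphN /= mulNr.
- exists (Pa * Pb), (ma + mb)%MM.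
  rewrite !rmorphM /= mmap1D.
  by field; rewrite !nz.
Qed.

Lemma ringR_subfamily_prime p :
  (forall a b : R, divides p (a * b) -> divides p a \/ divides p b) ->
  p \isn't a GRing.unit -> forall X Y Z mx my mz,
  ev s X / mmap1 y mx * (ev s Y / mmap1 y my) = p%:F * (ev s Z / mmap1 y mz) ->
  Defs.sdvd A p%:F (ev s X / mmap1 y mx) \/ Defs.sdvd A p%:F (ev s Y / mmap1 y my).
Proof.
move=> p_prime p_nunit X Y Z mx my mz e.
have nz := mmap1_subfamily_neq0.
have eXYZ : X * Y * 'X_[mz] = p%:MP * (Z * 'X_[mx] * 'X_[my]).
  apply: ev_subfamily_inj; rewrite !rmorphM /= !mmapX mmapC /=.
  transitivity (ev s X / mmap1 y mx * (ev s Y / mmap1 y my) *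
                (mmap1 y mx * mmap1 y my * mmap1 y mz)).
    by field; rewrite !nz.
  by rewrite e; field; rewrite !nz.
have ev_pdvd Q m : Defs.sdvd A p%:F (ev s (p%:MP * Q) / mmap1 y m).
  exists (ev s Q / mmap1 y m); first by apply: lr_mul; [apply: ringR_ev | apply: ringR_mmap1V].
  by rewrite rmorphM /= mmapC mulrA.
have := dividesC_mul p_prime (dividesC_mulX p_prime p_nunit (ex_intro _ _ eXYZ)).
by case=> [[Q ->] | [Q ->]]; [left | right]; apply: ev_pdvd.
Qed.

End Representation.

Section OverUFD.
Hypotheses (hR : is_UFD R) (x_indep : alg_indep kappa x T).

Lemma ringR_prime p : ufd_irreducible p -> forall a b c, A a -> A b -> A c ->
  a * b = p%:F * c -> Defs.sdvd A p%:F a \/ Defs.sdvd A p%:F b.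
Proof.
move=> p_irr a b c Aa Ab Ac.
have [s [s_uniq sT ls]] : exists s : seq I, [/\ uniq s, {in s, forall i, T i}
    & {in [:: a; b; c], forall z, ringR kappa x (fun i => i \in s) z}].
  by apply: laurent_ring_common_support => z; rewrite !inE => /or3P [] /eqP ->.
have rep := ringR_subfamily_rep s_uniq sT x_indep.
have [/rep [X [mx ->]] /rep [Y [my ->]] /rep [Z [mz ->]]] :
    [/\ ringR kappa x (fun i => i \in s) a, ringR kappa x (fun i => i \in s) b
       & ringR kappa x (fun i => i \in s) c].
  by split; apply: ls; rewrite !inE eqxx ?orbT.
apply: (ringR_subfamily_prime s_uniq sT x_indep (ufd_irreducible_prime hR p_irr)).
by case: p_irr.
Qed.

Lemma ringR_cancel_unit_prod (s : seq R) : {in s, forall q, ufd_irreducible q} ->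
  forall u a b c, u \is a GRing.unit -> A a -> A b -> A c ->
  (u * \prod_(q <- s) q)%:F * a = b * c ->
  exists m1 m2 b' c', [/\ A b', A c', b = m1%:F * b', c = m2%:F * c' & a = b' * c'].
Proof.
elim: s => [|p s IH] s_irr u a b c u_unit Aa Ab Ac.
  rewrite big_nil mulr1 => e; exists 1, u, b, ((u^-1)%:F * c).
  have uK : u%:F * (u^-1)%:F = 1 by rewrite -rmorphM -tofracM mulrV ?tofrac1 ?rmorph1.
  split => //; first by apply: lr_mul => //; apply: ringR_cst.
  - by rewrite tofrac1 rmorph1 mul1r.
  - by rewrite mulrA uK mul1r.
  by rewrite mulrCA -e mulrA (mulrC _ u%:F) uK mul1r.
have p_irr : ufd_irreducible p by apply: s_irr; apply: mem_head.
have {}s_irr : {in s, forall q, ufd_irreducible q}.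
  by move=> q qs; apply: s_irr; rewrite inE qs orbT.
have p0 : p%:F != 0 by rewrite kappa_tofrac_eq0; case: p_irr.
rewrite big_cons mulrCA tofracM rmorphM -mulrA => e.
have Aa' : A ((u * \prod_(q <- s) q)%:F * a) by apply: lr_mul => //; apply: ringR_cst.
have [[b1 Ab1 eb] | [c1 Ac1 ec]] := ringR_prime p_irr Ab Ac Aa' (esym e).
  have e1 : (u * \prod_(q <- s) q)%:F * a = b1 * c by apply: (mulfI p0); rewrite e eb mulrA.
  have [m1 [m2 [b' [c' [Ab' Ac' eb1 ec' ea]]]]] := IH s_irr u a b1 c u_unit Aa Ab1 Ac e1.
  by exists (p * m1), m2, b', c'; rewrite eb eb1 tofracM rmorphM mulrA.
have e1 : (u * \prod_(q <- s) q)%:F * a = b * c1 by apply: (mulfI p0); rewrite e ec mulrCA.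
have [m1 [m2 [b' [c' [Ab' Ac' eb ec1 ea]]]]] := IH s_irr u a b c1 u_unit Aa Ab Ac1 e1.
by exists m1, (p * m2), b', c'; rewrite ec ec1 tofracM rmorphM mulrA.
Qed.

Lemma ringR_cancel_cst m a b c : m != 0 -> A a -> A b -> A c -> m%:F * a = b * c ->
  exists m1 m2 b' c', [/\ A b', A c', b = m1%:F * b', c = m2%:F * c' & a = b' * c'].
Proof.
move=> m0; have [u [s [u_unit s_irr ->]]] := ufd_factorization hR m0.
exact: ringR_cancel_unit_prod.
Qed.

Lemma sirreducible_ringK a : sirreducible A a -> sirreducible B a.
Proof.
move=> [Aa a0 a_irr]; split => //; first exact: ringR_ringK.
move=> b c Bb Bc e.
have b0 : b != 0 by apply: contraNneq a0 => b0; rewrite e b0 mul0r.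
have c0 : c != 0 by apply: contraNneq a0 => c0; rewrite e c0 mulr0.
have [rb rb0 Ab] := ringK_clear_denom Bb.
have [rc rc0 Ac] := ringK_clear_denom Bc.
have e' : (rb * rc)%:F * a = (rb%:F * b) * (rc%:F * c) by rewrite e tofracM rmorphM; ring.
have [mb [mc [b' [c' [Ab' Ac' eb ec ea]]]]] :=
  ringR_cancel_cst (mulf_neq0 rb0 rc0) Aa Ab Ac e'.
have [ub' | uc'] := a_irr _ _ Ab' Ac' ea; [left | right].
  exact: sunit_ringK_scale rb0 b0 eb ub'.
exact: sunit_ringK_scale rc0 c0 ec uc'.
Qed.

Lemma scoprime_ringK a1 a2 : A a1 -> A a2 -> a1 != 0 ->
  scoprime A a1 a2 -> scoprime B a1 a2.
Proof.
move=> Aa1 Aa2 a10 a12_cop d Bd [e1 Be1 de1] [e2 Be2 de2].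
have d0 : d != 0 by apply: contraNneq a10 => d0; rewrite de1 d0 mul0r.
have [r r0 Ad] := ringK_clear_denom Bd.
have [s1 s10 Ae1] := ringK_clear_denom Be1.
have [s2 s20 Ae2] := ringK_clear_denom Be2.
have E1 : (r * s1)%:F * a1 = (r%:F * d) * (s1%:F * e1) by rewrite de1 tofracM rmorphM; ring.
have E2 : (r * s2)%:F * a2 = (r%:F * d) * (s2%:F * e2) by rewrite de2 tofracM rmorphM; ring.
have [m1 [_ [d1 [f1 [Ad1 Af1 ed1 _ ea1]]]]] :=
  ringR_cancel_cst (mulf_neq0 r0 s10) Aa1 Ad Ae1 E1.
have [n1 [_ [d2 [f2 [Ad2 Af2 ed2 _ ea2]]]]] :=
  ringR_cancel_cst (mulf_neq0 r0 s20) Aa2 Ad Ae2 E2.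
have n10 : n1 != 0.
  apply: contraNneq d0 => n10; move/eqP: ed2.
  by rewrite n10 tofrac0 rmorph0 mul0r mulf_eq0 kappa_tofrac_eq0 (negbTE r0).
(* d1 | a1 and d2 | a2 are constant multiples of each other: cancelling the
   constants between them gives a common divisor g of a1 and a2 in A. *)
have E3 : n1%:F * d2 = d1 * m1%:F by rewrite -ed2 ed1 mulrC.
have [k1 [_ [g [h [Ag Ah ed1' _ ed2']]]]] := ringR_cancel_cst n10 Ad2 Ad1 (ringR_cst m1) E3.
have g_unit : sunit A g.
  apply: a12_cop => //.
    exists (k1%:F * f1); first by apply: lr_mul => //; apply: ringR_cst.
    by rewrite ea1 ed1' mulrCA mulrA.
  by exists (h * f2); [apply: lr_mul | rewrite ea2 ed2' mulrA].
apply: (sunit_ringK_scale (m := m1 * k1) r0 d0 _ g_unit).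
by rewrite ed1 ed1' tofracM rmorphM mulrA.
Qed.

End OverUFD.

End LaurentRings.

Theorem lemma3p4
  (* R a UFD, K = {fraction R} *)
  (R : idomainType) (hR : is_UFD R)
  (* L a Z-module generated by distinct v_1..v_N (N = n.+1), v_N = v ord_max *)
  (L : zmodType) (n : nat) (v : 'I_n.+1 -> L)
  (hv_inj : injective v) (hv_gen : generates v) (hv_ind : nonneg_indep v)
  (* Phi: irreducible Laurent polynomial, not a monomial, depending on all variables *)
  (Phi : lpoly R n.+1)
  (hPhi_irr : sirreducible (LaurentR (fun _ => True)) (lelem Phi))
  (hPhi_nm : ~ is_laurent_monomial Phi)
  (hPhi_dep : depends_on_all Phi)
  (* v_N is the minimum of {0, v_1, ..., v_N} *)
  (hmin : lle v (v ord_max) 0 /\ forall i, lle v (v ord_max) (v i))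
  (* the equation can be solved for Y_N by an irreducible Laurent polynomial Psi:
     Y_N = Psi(Y_1, ..., Y_{N-1}, Phi(Y_1, ..., Y_N)) *)
  (Psi : lpoly R n.+1)
  (hPsi_irr : sirreducible (LaurentR (fun _ => True)) (lelem Psi))
  (hPsi : leval (@rcst R n.+1)
             (fun i => if i == ord_max then lelem Phi else @rvar R n.+1 i) Psi
          = @rvar R n.+1 ord_max)
  (* H light-cone regular *)
  (H : L -> Prop) (hH : light_cone_regular v H)
  (* the f_h live in a field F containing K, f_{h0} (h0 in H0) algebraically
     independent over K, and f_h (h in H \ H0) given by the recursion *)
  (F : fieldType) (kappa : {rmorphism {fraction R} -> F}) (f : L -> F)
  (hindep : alg_indep kappa f (init_boundary v H))
  (hrec : forall h, H h -> ~ init_boundary v H h ->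
            f h = leval (fun r : R => kappa (FracField.tofrac r))
                        (fun i => f (h + v i)) Phi)
  (* Laurent property, irreducibility and coprimeness over R *)
  (hLaurent : forall h, H h -> ringR kappa f (init_boundary v H) (f h))
  (hirr : forall h, H h -> sirreducible (ringR kappa f (init_boundary v H)) (f h))
  (hcop : forall h1 h2, H h1 -> H h2 -> h1 <> h2 ->
            scoprime (ringR kappa f (init_boundary v H)) (f h1) (f h2)) :
  (* the same three properties over K *)
  [/\ (forall h, H h -> ringK kappa f (init_boundary v H) (f h)),
      (forall h, H h -> ~ init_boundary v H h ->
         sirreducible (ringK kappa f (init_boundary v H)) (f h))
    & (forall h1 h2, H h1 -> H h2 -> h1 <> h2 ->
         scoprime (ringK kappa f (init_boundary v H)) (f h1) (f h2))].
Proof.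
split.
- by move=> h Hh; apply/ringR_ringK/hLaurent.
- by move=> h Hh _; apply/(sirreducible_ringK hR hindep)/hirr.
- move=> h1 h2 H1 H2 h12; have [_ f1_neq0 _] := hirr h1 H1.
  by apply: (scoprime_ringK hR hindep _ _ f1_neq0 (hcop h1 h2 H1 H2 h12)); apply: hLaurent.
Qed.
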